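(* Let $\gamma\in\mathbb{Z}[\mathrm{i}]$ with $|\gamma|>1$, let $(\gamma,D)$ be an integral numeration system, and let $r\ge2$ be a real number such that $D\subseteq D_\gamma:=\{d\in\mathbb{Z}[\mathrm{i}]:|d|\le r|\gamma|\}$. If $n\ge1$ is an integer and $z\in\mathbb{Z}[\mathrm{i}]$ satisfies $|z|\le r|\gamma|^n$, then there exists a word $w=d_{n-1}\cdots d_0\in D_\gamma^n$ with $[w]_\gamma=z$.
   Context: For a finite $D\subset\mathbb{Z}[\mathrm{i}]$ containing $0$, a word $w=w_{n-1}\cdots w_0$ over $D$ has value $[w]_\gamma=\sum_{j=0}^{n-1}w_j\gamma^j$. $(\gamma,D)$ is an integral numeration system if every Gaussian integer has a unique such expansion (up to leading zeros). *)

From HB Require Import structures.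
From mathcomp Require Import all_boot all_order all_algebra.
From mathcomp Require Import complex.
From mathcomp Require Import reals.
Set Implicit Arguments. Unset Strict Implicit. Unset Printing Implicit Defensive.
Import Order.TTheory GRing.Theory Num.Theory.
Local Open Scope ring_scope.

Section Gauss.
Variable R : realType.

Definition cabs (z : R[i]) : R := Normc.normc z.

Definition gaussInt (z : R[i]) : bool :=
  (@complex.Re R z \in Num.int) && (@complex.Im R z \in Num.int).

(* Value [w]_g of a word.  A word w = w_{n-1} ... w_0 is stored as the
   sequence [:: w_0; w_1; ...; w_{n-1}] (list index j = digit w_j). *)
Definition wval (g : R[i]) (w : seq R[i]) : R[i] :=
  \sum_(j < size w) w`_j * g ^+ j.

Definition word_over (D : seq R[i]) (w : seq R[i]) : bool :=
  all (fun d => d \in D) w.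

(* (g, D) is an integral numeration system: D is a finite set of Gaussian
   integers containing 0, and every Gaussian integer has a unique expansion
   over D up to leading zeros (two expansions with the same value coincide
   after padding the shorter one with leading zeros). *)
Definition integral_numsys (g : R[i]) (D : seq R[i]) : Prop :=
  [/\ gaussInt g,
      all gaussInt D,
      0 \in D,
      (forall z, gaussInt z -> exists w, word_over D w /\ wval g w = z) &
      (forall w1 w2, word_over D w1 -> word_over D w2 ->
         wval g w1 = wval g w2 -> forall j, w1`_j = w2`_j)].

Definition Dgamma (r : R) (g : R[i]) (d : R[i]) : bool :=
  gaussInt d && (cabs d <= r * cabs g).

End Gauss.

From HB Require Import structures.
From mathcomp Require Import all_boot all_order all_algebra.
From mathcomp Require Import complex reals lra.
Set Implicit Arguments. Unset Strict Implicit. Unset Printing Implicit Defensive.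
Import Order.TTheory GRing.Theory Num.Theory.
Local Open Scope ring_scope.

(* Digits are produced by Euclidean division in Z[i], rounding the quotient
   z / g componentwise toward zero.  This gives a Gaussian integer q with
   |q| <= |z / g| and |z / g - q| < sqrt 2, so the digit d = z - g q satisfies
   |d| < sqrt 2 |g| <= r |g|, while |q| <= |z| / |g| <= r |g|^(n-1), and we
   may recurse on q. *)

Section GaussianExpansion.
Variable R : realType.
Implicit Types (x : R) (g z q d : R[i]).

Lemma cabs_ge0 z : 0 <= cabs z.
Proof. by case: z => a b; rewrite /cabs /= sqrtr_ge0. Qed.

Lemma sqr_cabs z : cabs z ^+ 2 = complex.Re z ^+ 2 + complex.Im z ^+ 2.
Proof. by case: z => a b; rewrite /cabs /= sqr_sqrtr // addr_ge0 ?sqr_ge0. Qed.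

Lemma cabsM z q : cabs (z * q) = cabs z * cabs q.
Proof. exact: Normc.normcM. Qed.

Lemma gaussIntB z q : gaussInt z -> gaussInt q -> gaussInt (z - q).
Proof.
case: z q => [a b] [c d] /andP[/= ia ib] /andP[/= ic id].
by apply/andP; split; rewrite /= rpredB.
Qed.

Lemma gaussIntM z q : gaussInt z -> gaussInt q -> gaussInt (z * q).
Proof.
case: z q => [a b] [c d] /andP[/= ia ib] /andP[/= ic id].
by apply/andP; split; rewrite /= ?(rpredB, rpredD, rpredM).
Qed.

Lemma int_trunc_nneg x : 0 <= x ->
  exists2 t : R, t \is a Num.int & t ^+ 2 <= x ^+ 2 /\ (x - t) ^+ 2 < 1.
Proof.
move=> x_ge0; exists (Num.floor x)%:~R; first exact: intr_int.
have fl_le := floor_le x; have fl_gt := floorD1_gt x; rewrite intrD in fl_gt.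
have fl_ge0 : 0 <= ((Num.floor x)%:~R : R) by rewrite ler0z floor_ge0.
split; nra.
Qed.

Lemma int_trunc x :
  exists2 t : R, t \is a Num.int & t ^+ 2 <= x ^+ 2 /\ (x - t) ^+ 2 < 1.
Proof.
have [/int_trunc_nneg //|x_lt0] := lerP 0 x.
have [|t t_int [t_le t_near]] := @int_trunc_nneg (- x); first lra.
exists (- t); first by rewrite rpredN.
split; first by rewrite sqrrN -(sqrrN x).
by rewrite opprK -sqrrN opprD.
Qed.

Lemma gaussInt_trunc z :
  exists2 q, gaussInt q & cabs q <= cabs z /\ cabs (z - q) ^+ 2 < 2.
Proof.
case: z => a b.
have [ta ta_int [ta_le ta_near]] := int_trunc a.
have [tb tb_int [tb_le tb_near]] := int_trunc b.
exists (Complex ta tb); first by rewrite /gaussInt /= ta_int tb_int.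
rewrite -ler_sqr ?nnegrE ?cabs_ge0 // !sqr_cabs /=; lra.
Qed.

Lemma gaussInt_divmod g z : gaussInt g -> gaussInt z -> g != 0 ->
  exists2 q, gaussInt q &
    cabs g * cabs q <= cabs z /\ cabs (z - g * q) ^+ 2 < 2 * cabs g ^+ 2.
Proof.
move=> g_int z_int g_neq0.
have [q q_int [q_le rem_lt]] := gaussInt_trunc (z / g).
have zE : z = g * (z / g) by rewrite mulrC divfK.
have cg_gt0 : 0 < cabs g.
  by rewrite lt_def cabs_ge0 andbT; apply: contra g_neq0 => /eqP/Normc.eq0_normc->.
exists q => //; split.
  by rewrite [X in _ <= cabs X]zE cabsM ler_wpM2l ?cabs_ge0.
rewrite [X in X - _]zE -mulrBr cabsM exprMn mulrC ltr_pM2r //.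
by rewrite exprn_gt0.
Qed.

Lemma wval1 g d : wval g [:: d] = d.
Proof. by rewrite /wval big_ord1 expr0 mulr1. Qed.

Lemma wval_cons g d w : wval g (d :: w) = d + g * wval g w.
Proof.
rewrite /wval /= big_ord_recl expr0 mulr1 mulr_sumr; congr (_ + _).
by apply: eq_bigr => i _; rewrite exprS mulrCA.
Qed.

Lemma Dgamma_expansion g r : gaussInt g -> 0 < cabs g -> 2 <= r ->
  forall n z, gaussInt z -> cabs z <= r * cabs g ^+ n.+1 ->
  exists w, [/\ size w = n.+1, all (Dgamma r g) w & wval g w = z].
Proof.
move=> g_int g_gt0 r_ge2; elim=> [|n IHn] z z_int z_le.
  exists [:: z]; split; rewrite ?wval1 //=.
  by rewrite andbT /Dgamma z_int -[cabs g]expr1.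
have g_neq0 : g != 0.
  by apply: contraTneq g_gt0 => ->; rewrite /cabs Normc.normc0 ltxx.
have [q q_int [q_le d_lt]] := gaussInt_divmod g_int z_int g_neq0.
have q_bound : cabs q <= r * cabs g ^+ n.+1.
  rewrite -(@ler_pM2l _ (cabs g)); last lra.
  by rewrite mulrCA -exprS (le_trans q_le).
have d_bound : cabs (z - g * q) <= r * cabs g.
  rewrite -ler_sqr ?nnegrE ?mulr_ge0 ?cabs_ge0 //; [rewrite exprMn | lra].
  have r_sqr : 2 <= r ^+ 2 by rewrite expr2; nra.
  exact: le_trans (ltW d_lt) (ler_wpM2r (sqr_ge0 _) r_sqr).
have [w [w_size w_Dg w_val]] := IHn q q_int q_bound.
exists (z - g * q :: w); split; first by rewrite /= w_size.
  by rewrite /= w_Dg /Dgamma d_bound gaussIntB ?gaussIntM.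
by rewrite wval_cons w_val subrK.
Qed.

End GaussianExpansion.

Theorem lemma2p8 (R : realType) (g : R[i]) (D : seq R[i]) (r : R) (n : nat)
    (z : R[i]) :
  gaussInt g -> 1 < cabs g ->
  integral_numsys g D ->
  2 <= r ->
  (forall d, d \in D -> Dgamma r g d) ->
  (1 <= n)%N ->
  gaussInt z -> cabs z <= r * cabs g ^+ n ->
  exists w : seq R[i],
    [/\ size w = n, all (Dgamma r g) w & wval g w = z].
Proof.
move=> g_int g_gt1 _ r_ge2 _; case: n => [//|n] _.
exact: Dgamma_expansion (lt_trans ltr01 g_gt1) r_ge2 n z.
Qed.
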